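(* Let $\kappa$ be a regular uncountable cardinal. Then (a) the quotient Boolean algebra $\mathcal P(\kappa)/[\kappa]^{<\kappa}$ does not have the $\kappa$-FN, and (b) the power set algebra $\mathcal P(\kappa)$ does not have the $\kappa$-FN.
   Context: For an infinite cardinal $\kappa$, a Boolean algebra $B$ has the $\kappa$-Freese–Nation property ($\kappa$-FN) if there is a map $f:B\to[B]^{<\kappa}$ such that for all $a,b\in B$ with $a\le b$ there is $c\in f(a)\cap f(b)$ with $a\le c\le b$. $[\kappa]^{<\kappa}$ denotes the ideal of subsets of $\kappa$ of cardinality $<\kappa$. *)

(* plain Prop-valued set theory.
   An infinite cardinal kappa is represented by a type K of cardinality kappa
   (e.g. the set of ordinals below kappa). Subsets of a type A are predicates
   A -> Prop. *)

Definition injective {A B : Type} (g : A -> B) : Prop :=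
  forall x y, g x = g y -> x = y.

(* X has cardinality < |K| (X in [A]^{<kappa}): there is no injection of K into X. *)
Definition small (K : Type) {A : Type} (X : A -> Prop) : Prop :=
  ~ exists g : K -> A, injective g /\ forall k, X (g k).

Definition uncountable (K : Type) : Prop :=
  ~ exists g : K -> nat, injective g.

Definition regular (K : Type) : Prop :=
  forall (I : Type) (F : I -> K -> Prop),
    small K (fun _ : I => True) ->
    (forall i, small K (F i)) ->
    small K (fun k => exists i, F i k).

Definition kFN (K : Type) (B : Type) (le : B -> B -> Prop) : Prop :=
  exists f : B -> (B -> Prop),
    (forall b, small K (f b)) /\
    forall a b, le a b ->
      exists c, f a c /\ f b c /\ le a c /\ le c b.

Definition Pow (K : Type) : Type := K -> Prop.
Definition Pow_le {K : Type} (a b : Pow K) : Prop := forall k, a k -> b k.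

Definition setdiff {K : Type} (a b : Pow K) : Pow K := fun k => a k /\ ~ b k.
Definition eq_mod {K : Type} (a b : Pow K) : Prop :=
  small K (setdiff a b) /\ small K (setdiff b a).

Definition PowMod (K : Type) : Type :=
  { C : Pow K -> Prop | exists a : Pow K, forall b, C b <-> eq_mod a b }.

Definition PowMod_le {K : Type} (C D : PowMod K) : Prop :=
  exists a b, proj1_sig C a /\ proj1_sig D b /\ small K (setdiff a b).

From mathcomp Require ssreflect ssrbool eqtype boolp wochoice.
From Stdlib Require Import Classical ClassicalEpsilon FunctionalExtensionality.

(* Well-order kappa and take P of order type kappa: a large set with small
   proper initial segments.  Given [f] with small values, choose by recursion
   along P a point [b_a] in P and, for every [c] in some [f {g}] (g < a in P)
   with [b_a] in [c], a witness in [c] that is neither [b_a] nor an earlier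
   point; no point is then a witness.  Let D be the set of witnesses.  By
   regularity the small family [f (P \ D)] meets the [f {g}], g in P, only
   below some [a] in P, so an interpolant in [f {b_a}] and [f (P \ D)] between
   [{b_a}] and [P \ D] contains a witness, which is absurd.  For the quotient,
   kappa disjoint sets [A_i] of size kappa make [x |-> [union of A_i, i in x]]
   an embedding along which interpolants pull back. *)

Definition subset {A : Type} (X Y : A -> Prop) : Prop := forall x, X x -> Y x.

Definition singleton {A : Type} (a : A) : A -> Prop := fun y => y = a.

Definition trichotomous {A : Type} (lt : A -> A -> Prop) : Prop :=
  forall x y, x = y \/ lt x y \/ lt y x.

Definition kFN_Pow_on (K : Type) (Q : K -> Prop) : Prop :=
  exists f : Pow K -> Pow K -> Prop,
    (forall b, small K (f b)) /\
    forall a b, subset a b -> subset b Q ->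
      exists c, f a c /\ f b c /\ subset a c /\ subset c b.

Module WellOrdering.
Import ssreflect ssrbool eqtype boolp wochoice.

Lemma wf_trichotomous_exists (A : Type) :
  exists lt : A -> A -> Prop, well_founded lt /\ trichotomous lt.
Proof.
have [R Rwo] := well_ordering_principle {classic A}.
have Rmin (X : A -> Prop) x : X x -> exists2 z, X z & forall y, X y -> R z y.
  move=> Xx; have [|z [[Xz zmin] _]] := Rwo [pred y | `[< X y >]].
    by exists x; rewrite inE; apply/asboolP.
  by exists z => [|y Xy]; [apply/asboolP | apply/zmin/asboolP].
have Rpair x y : (R x y \/ R y x) /\ (R x y -> R y x -> x = y).
  pose xy := [pred w | `[< w = x \/ w = y >]].
  have [|z [[xyz zmin] zuniq]] := Rwo xy; first by exists x; apply/asboolP; left.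
  split; first by case/asboolP: xyz => <-; [left | right]; apply: zmin; apply/asboolP; auto.
  move=> Rxy Ryx.
  have [_ <- Rxx] := Rmin (eq x) x (Logic.eq_refl x).
  have [_ <- Ryy] := Rmin (eq y) y (Logic.eq_refl y).
  have minx : minimum_of R xy x.
    by split=> [|w /asboolP [->|->]]; [apply/asboolP; left | exact: Rxx | ].
  have miny : minimum_of R xy y.
    by split=> [|w /asboolP [->|->]]; [apply/asboolP; right | | exact: Ryy].
  by rewrite -(zuniq x minx) -(zuniq y miny).
exists (fun x y => ~ R y x); split.
  move=> x; apply: NNPP => /(Rmin (fun z => ~ Acc _ z)) [z zNacc zmin].
  by apply: zNacc; constructor=> y Ryz; apply: NNPP => /zmin.
move=> x y; have [[Rxy|Ryx] Ranti] := Rpair x y.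
  by have [/(Ranti Rxy)|/negP] := boolP (R y x); auto.
by have [/Ranti/(_ Ryx)|/negP] := boolP (R x y); auto.
Qed.

End WellOrdering.

Lemma wf_exists_minimal {A : Type} (lt : A -> A -> Prop) (X : A -> Prop) :
  well_founded lt -> (exists x, X x) -> exists m, X m /\ forall y, X y -> ~ lt y m.
Proof.
  intros lt_wf [x Xx]. apply NNPP. intros Hnone. induction (lt_wf x) as [x _ IH].
  apply Hnone. exists x. split; [exact Xx |]. intros y Xy yx. exact (IH y yx Xy).
Qed.

Lemma transfinite_choice {I X : Type} (lt : I -> I -> Prop) (x0 : X) :
  well_founded lt -> forall good : I -> (I -> X) -> X -> Prop,
  (forall a h h' x, (forall i, lt i a -> h i = h' i) -> good a h x -> good a h' x) ->
  (forall a h, exists x, good a h x) ->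
  exists F : I -> X, forall a, good a F (F a).
Proof.
  intros lt_wf good good_local good_exists.
  destruct (choice (fun p x => good (fst p) (snd p) x) (fun p => good_exists (fst p) (snd p)))
    as [step step_good].
  (* [x0] is a junk value outside the segment below [a]. *)
  set (extend := fun a (r : forall i, lt i a -> X) i =>
         match excluded_middle_informative (lt i a) with
         | left H => r i H
         | right _ => x0
         end).
  set (F := Fix lt_wf (fun _ => X) (fun a r => step (a, extend a r))).
  assert (F_eq : forall a, F a = step (a, extend a (fun i _ => F i))).
  { intros a. apply (Fix_eq lt_wf (fun _ => X)). intros b r r' Hrr'.
    replace (extend b r') with (extend b r); [reflexivity |].
    apply functional_extensionality. intros i. unfold extend.
    destruct (excluded_middle_informative (lt i b)); auto. }
  exists F. intros a. rewrite F_eq.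
  apply good_local with (h := extend a (fun i _ => F i)); [| apply (step_good (a, _))].
  intros i ia. unfold extend. destruct (excluded_middle_informative (lt i a)) as [_ | nia].
  - reflexivity.
  - contradiction.
Qed.

Section Cardinality.

Variable K : Type.

Lemma small_subset {A : Type} (X Y : A -> Prop) : subset X Y -> small K Y -> small K X.
Proof.
  intros XY HY [g [g_inj gX]]. apply HY. exists g.
  split; [exact g_inj | intros k; apply XY, gX].
Qed.

Lemma small_image {A B : Type} (h : A -> B) (X : A -> Prop) :
  small K X -> small K (fun y => exists x, X x /\ y = h x).
Proof.
  intros HX [g [g_inj gY]]. apply HX.
  destruct (choice (fun k x => X x /\ g k = h x) gY) as [s Hs].
  exists s. split; [| intros k; apply Hs].
  intros k k' E. apply g_inj. rewrite (proj2 (Hs k)), (proj2 (Hs k')), E. reflexivity.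
Qed.

Lemma not_small_full : ~ small K (fun _ : K => True).
Proof. intros H. apply H. exists (fun k => k). split; [intros x y E; exact E | auto]. Qed.

Hypothesis K_uncountable : uncountable K.
Hypothesis K_regular : regular K.

Lemma uncountable_inhabited : inhabited K.
Proof.
  apply NNPP. intros N. apply K_uncountable. exists (fun _ => 0).
  intros x. exfalso. exact (N (inhabits x)).
Qed.

Lemma small_empty {A : Type} : small K (fun _ : A => False).
Proof. intros [g [_ gX]]. destruct uncountable_inhabited as [k]. exact (gX k). Qed.

Lemma small_subsingleton {A : Type} (X : A -> Prop) :
  (forall x y, X x -> X y -> x = y) -> small K X.
Proof.
  intros X_sub. destruct (classic (exists x, X x)) as [[x Xx] | Hnone].
  - intros [g [g_inj gX]]. apply K_uncountable. exists (fun _ => 0).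
    intros k k' _. apply g_inj. apply (X_sub _ _ (gX k) (gX k')).
  - apply small_subset with (Y := fun _ => False); [| exact small_empty].
    intros x Xx. exact (Hnone (ex_intro _ x Xx)).
Qed.

Lemma small_singleton {A : Type} (a : A) : small K (singleton a).
Proof. apply small_subsingleton. intros x y -> ->. reflexivity. Qed.

Lemma small_bigunion {I A : Type} (X : I -> Prop) (F : I -> A -> Prop) :
  small K X -> (forall i, X i -> small K (F i)) ->
  small K (fun y => exists i, X i /\ F i y).
Proof.
  intros HX HF [g [g_inj gU]].
  destruct (choice (fun k i => X i /\ F i (g k)) gU) as [idx Hidx].
  apply not_small_full.
  apply small_subset with (Y := fun k => exists i : sig X, idx k = proj1_sig i).
  - intros k _. exists (exist X (idx k) (proj1 (Hidx k))). reflexivity.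
  - apply K_regular.
    + intros [s [s_inj _]]. apply HX. exists (fun k => proj1_sig (s k)). split.
      * intros k k' E. apply s_inj. destruct (s k), (s k'). simpl in E. subst.
        f_equal. apply proof_irrelevance.
      * intros k. exact (proj2_sig (s k)).
    + intros [i Xi] [s [s_inj si]]. apply (HF i Xi). exists (fun k => g (s k)). split.
      * intros k k' E. apply s_inj, g_inj, E.
      * intros k. simpl in si. rewrite <- (si k). apply Hidx.
Qed.

Lemma small_union {A : Type} (X Y : A -> Prop) :
  small K X -> small K Y -> small K (fun y => X y \/ Y y).
Proof.
  intros HX HY.
  apply small_subset with (Y := fun y => exists b : bool, True /\ if b then X y else Y y).
  - intros y [Xy | Yy]; [exists true | exists false]; auto.
  - apply small_bigunion; [| intros [|] _; assumption].
    intros [g [g_inj _]]. apply K_uncountable. exists (fun k => if g k then 0 else 1).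
    intros k k' E. apply g_inj. destruct (g k), (g k'); simpl in E; congruence.
Qed.

Lemma not_small_setdiff {A : Type} (X Y : A -> Prop) :
  ~ small K X -> small K Y -> ~ small K (setdiff X Y).
Proof.
  intros HX HY HXY. apply HX.
  apply small_subset with (Y := fun x => Y x \/ setdiff X Y x); [| apply small_union; assumption].
  intros x Xx. destruct (classic (Y x)); [left | right; split]; assumption.
Qed.

Lemma exists_outside {A : Type} (X Y : A -> Prop) :
  ~ small K X -> small K Y -> exists x, X x /\ ~ Y x.
Proof.
  intros HX HY. apply NNPP. intros Hnone. apply (not_small_setdiff X Y HX HY).
  apply small_subset with (Y := fun _ => False); [| exact small_empty].
  intros x Hx. exact (Hnone (ex_intro _ x Hx)).
Qed.

Lemma injection_avoiding (Y : K -> Prop) :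
  small K Y -> exists p : K -> K, injective p /\ forall k, ~ Y (p k).
Proof.
  intros HY. apply NNPP. intros Hnone.
  apply (not_small_setdiff _ Y not_small_full HY). intros [p [p_inj pY]].
  apply Hnone. exists p. split; [exact p_inj | intros k; exact (proj2 (pY k))].
Qed.

Lemma large_subset_with_small_segments (lt : K -> K -> Prop) (Q : K -> Prop) :
  well_founded lt -> ~ small K Q ->
  exists P, subset P Q /\ ~ small K P /\ forall a, P a -> small K (fun x => P x /\ lt x a).
Proof.
  intros lt_wf HQ.
  (* Cut [Q] at the least point whose initial segment in [Q] is large, if there is one. *)
  destruct (classic (exists z, Q z /\ ~ small K (fun x => Q x /\ lt x z))) as [Hz | Hnone].
  - destruct (wf_exists_minimal lt _ lt_wf Hz) as [m [[Qm Hm] m_min]].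
    exists (fun x => Q x /\ lt x m).
    split; [intros x [Qx _]; exact Qx | split; [exact Hm |]].
    intros a [Qa am]. apply small_subset with (Y := fun x => Q x /\ lt x a).
    + intros x [[Qx _] xa]. split; assumption.
    + apply NNPP. intros Ha. exact (m_min a (conj Qa Ha) am).
  - exists Q. split; [intros x Qx; exact Qx | split; [exact HQ |]].
    intros a Qa. apply NNPP. intros Ha. apply Hnone. exists a. split; assumption.
Qed.

Section KappaSequence.

Variables (lt : K -> K -> Prop) (P : K -> Prop).

Definition segment (a : K) : K -> Prop := fun x => P x /\ lt x a.
Definition closed_segment (a : K) : K -> Prop := fun x => P x /\ (lt x a \/ x = a).

Hypothesis lt_wf : well_founded lt.
Hypothesis lt_trichotomous : trichotomous lt.
Hypothesis P_large : ~ small K P.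
Hypothesis segment_small : forall a, P a -> small K (segment a).

Lemma closed_segment_small (a : K) : P a -> small K (closed_segment a).
Proof.
  intros Pa. apply small_subset with (Y := fun x => segment a x \/ singleton a x).
  - intros x [Px [xa | ->]]; [left; split | right; reflexivity]; assumption.
  - apply small_union; [apply segment_small, Pa | apply small_singleton].
Qed.

Lemma small_bounded (X : K -> Prop) :
  small K X -> exists a, P a /\ forall x, X x -> P x -> lt x a.
Proof.
  intros HX.
  destruct (exists_outside P (fun y => exists x, (X x /\ P x) /\ closed_segment x y) P_large)
    as [a [Pa Ha]].
  { apply small_bigunion; [| intros x [_ Px]; apply closed_segment_small, Px].
    apply small_subset with (Y := X); [intros x [Xx _]; exact Xx | exact HX]. }
  exists a. split; [exact Pa |]. intros x Xx Px.
  destruct (lt_trichotomous x a) as [xa | [xa | ax]]; [| exact xa |];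
    exfalso; apply Ha; exists x; repeat split; auto.
Qed.

Lemma pair_code_exists :
  exists e : K -> K -> K, forall a a' x x', P a -> P a' ->
    closed_segment a x -> closed_segment a' x' -> e a x = e a' x' -> a = a' /\ x = x'.
Proof.
  set (used := fun (h : K -> K -> K) a y =>
         exists g, segment a g /\ exists x, closed_segment g x /\ y = h g x).
  destruct (transfinite_choice lt (fun k => k) lt_wf
              (fun a h p => P a -> injective p /\ forall k, ~ used h a (p k)))
    as [e e_good].
  - intros a h h' p hh' Hp Pa. destruct (Hp Pa) as [p_inj p_new].
    split; [exact p_inj |]. intros k [g [ga [x [gx E]]]].
    apply (p_new k). exists g. split; [exact ga |]. exists x.
    rewrite hh'; [split; assumption | apply ga].
  - intros a h. destruct (classic (P a)) as [Pa | nPa]; [| exists (fun k => k); contradiction].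
    destruct (injection_avoiding (used h a)) as [p [p_inj p_new]].
    + apply (small_bigunion (segment a)); [apply segment_small, Pa |].
      intros g [Pg _]. apply small_image, closed_segment_small, Pg.
    + exists p. auto.
  - exists e. intros a a' x x' Pa Pa' xa x'a' E.
    destruct (lt_trichotomous a a') as [<- | [aa' | a'a]].
    + split; [reflexivity | apply (proj1 (e_good a Pa)), E].
    + exfalso. apply (proj2 (e_good a' Pa') x'). exists a. split; [split; assumption |].
      exists x. split; [exact xa | symmetry; exact E].
    + exfalso. apply (proj2 (e_good a Pa) x). exists a'. split; [split; assumption |].
      exists x'. split; [exact x'a' | exact E].
Qed.

Lemma disjoint_large_family :
  exists A : K -> Pow K,
    (forall i, P i -> ~ small K (A i)) /\
    (forall i j y, P i -> P j -> A i y -> A j y -> i = j).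
Proof.
  destruct pair_code_exists as [e e_inj].
  exists (fun x y => exists a, P a /\ closed_segment a x /\ y = e a x). split.
  - intros x Px Hsmall.
    destruct (NNPP _ (not_small_setdiff P (segment x) P_large (segment_small x Px)))
      as [h [h_inj h_late]].
    assert (xh : forall k, closed_segment (h k) x).
    { intros k. destruct (h_late k) as [Phk hk_late]. split; [exact Px |].
      destruct (lt_trichotomous x (h k)) as [E | [xh | hx]]; [right | left |]; auto.
      exfalso. apply hk_late. split; assumption. }
    apply Hsmall. exists (fun k => e (h k) x). split.
    + intros k k' E. apply h_inj.
      exact (proj1 (e_inj _ _ _ _ (proj1 (h_late k)) (proj1 (h_late k')) (xh k) (xh k') E)).
    + intros k. exists (h k). split; [apply h_late | split; [apply xh | reflexivity]].
  - intros x x' y Px Px' [a [Pa [xa ->]]] [a' [Pa' [x'a' E]]].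
    exact (proj2 (e_inj _ _ _ _ Pa Pa' xa x'a' E)).
Qed.

Section Interpolation.

Variable f : Pow K -> Pow K -> Prop.
Hypothesis f_small : forall b, small K (f b).

Definition f_below (a : K) (c : Pow K) : Prop := exists g, segment a g /\ f (singleton g) c.

Lemma f_below_small (a : K) : P a -> small K (f_below a).
Proof.
  intros Pa. apply (small_bigunion (segment a)); [apply segment_small, Pa |].
  intros g _. apply f_small.
Qed.

Lemma f_bounded (b : Pow K) :
  exists a, P a /\ forall g c, P g -> f (singleton g) c -> f b c -> f_below a c.
Proof.
  set (pick := fun c => epsilon uncountable_inhabited (fun g => P g /\ f (singleton g) c)).
  destruct (small_bounded (fun g => exists c, f b c /\ g = pick c)) as [a [Pa a_bound]].
  { apply small_image, f_small. }
  exists a. split; [exact Pa |]. intros g c Pg gc bc.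
  assert (picked : P (pick c) /\ f (singleton (pick c)) c).
  { apply epsilon_spec. exists g. split; assumption. }
  exists (pick c). split; [split | apply picked].
  - apply picked.
  - apply a_bound; [exists c; split; [exact bc | reflexivity] | apply picked].
Qed.

Record stage : Type := Stage { point : K; witness : Pow K -> K }.

Definition chosen_before (h : K -> stage) (a x : K) : Prop :=
  exists g, segment a g /\ x = point (h g).

Definition witnessed_before (h : K -> stage) (a x : K) : Prop :=
  exists g, segment a g /\ exists c, (f_below g c /\ c (point (h g))) /\ x = witness (h g) c.

Definition admissible (a : K) (h : K -> stage) (s : stage) : Prop :=
  P a ->
  P (point s) /\ ~ chosen_before h a (point s) /\ ~ witnessed_before h a (point s) /\
  forall c, f_below a c -> c (point s) ->
    c (witness s c) /\ ~ chosen_before h a (witness s c) /\ witness s c <> point s.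

Lemma admissible_local (a : K) (h h' : K -> stage) (s : stage) :
  (forall g, lt g a -> h g = h' g) -> admissible a h s -> admissible a h' s.
Proof.
  intros hh' Hs Pa.
  assert (chosen : forall x, chosen_before h' a x -> chosen_before h a x).
  { intros x [g [ga E]]. exists g. rewrite hh'; [split; assumption | apply ga]. }
  assert (witnessed : forall x, witnessed_before h' a x -> witnessed_before h a x).
  { intros x [g [ga Hg]]. exists g. rewrite hh'; [split; assumption | apply ga]. }
  destruct (Hs Pa) as [Ps [s_new [s_unwitnessed s_witness]]].
  split; [exact Ps | split; [auto | split; [auto |]]].
  intros c ac cs. destruct (s_witness c ac cs) as [cw [w_new w_s]].
  split; [exact cw | split; [auto | exact w_s]].
Qed.

Lemma admissible_exists (a : K) (h : K -> stage) : exists s, admissible a h s.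
Proof.
  destruct uncountable_inhabited as [k0].
  destruct (classic (P a)) as [Pa | nPa];
    [| exists (Stage k0 (fun _ => k0)); intros Pa; contradiction].
  (* Choosing a [b] that is the only point of some [c] in [f_below a] not
     chosen before [a] would leave no witness for [c]. *)
  set (lonely := fun b => exists c, f_below a c /\
         c b /\ ~ chosen_before h a b /\ forall d, c d -> chosen_before h a d \/ d = b).
  assert (small_bad : small K (fun b =>
            chosen_before h a b \/ witnessed_before h a b \/ lonely b)).
  { apply small_union; [| apply small_union].
    - apply small_image, segment_small, Pa.
    - apply (small_bigunion (segment a)); [apply segment_small, Pa |].
      intros g [Pg _]. apply small_image.
      apply small_subset with (Y := f_below g); [intros c [gc _]; exact gc |].
      apply f_below_small, Pg.
    - apply (small_bigunion (f_below a)); [apply f_below_small, Pa |].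
      intros c _. apply small_subsingleton. intros b b' [_ [_ b_only]] [cb' [nb' _]].
      destruct (b_only b' cb') as [chosen | ->]; [contradiction | reflexivity]. }
  destruct (exists_outside P _ P_large small_bad) as [b [Pb b_good]].
  set (other := fun c d => c d /\ ~ chosen_before h a d /\ d <> b).
  exists (Stage b (fun c => epsilon (inhabits k0) (other c))).
  intros _. simpl. split; [exact Pb | split; [| split]].
  - intros Hb. apply b_good. left. exact Hb.
  - intros Hb. apply b_good. right. left. exact Hb.
  - intros c ac cb. apply (epsilon_spec (inhabits k0) (other c)).
    apply NNPP. intros Hnone. apply b_good. right. right. exists c.
    split; [exact ac | split; [exact cb | split]].
    + intros Hb. apply b_good. left. exact Hb.
    + intros d cd. destruct (classic (chosen_before h a d)) as [Hd | Hd]; [left; exact Hd | right].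
      apply NNPP. intros db. exact (Hnone (ex_intro _ d (conj cd (conj Hd db)))).
Qed.

Section Construction.

Variable F : K -> stage.
Hypothesis F_admissible : forall a, admissible a F (F a).

Lemma point_not_witness (a g : K) (c : Pow K) :
  P a -> P g -> f_below g c -> c (point (F g)) -> point (F a) <> witness (F g) c.
Proof.
  intros Pa Pg gc cg E.
  destruct (lt_trichotomous g a) as [<- | [ga | ag]].
  - destruct (F_admissible g Pg) as [_ [_ [_ Hw]]].
    destruct (Hw c gc cg) as [_ [_ w_new]]. exact (w_new (eq_sym E)).
  - destruct (F_admissible a Pa) as [_ [_ [a_unwitnessed _]]].
    apply a_unwitnessed. exists g. split; [split; assumption |].
    exists c. repeat split; assumption.
  - destruct (F_admissible g Pg) as [_ [_ [_ Hw]]].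
    destruct (Hw c gc cg) as [_ [w_new _]].
    apply w_new. exists a. split; [split; assumption | symmetry; exact E].
Qed.

End Construction.

Lemma no_interpolation :
  ~ forall a b, subset a b -> subset b P ->
      exists c, f a c /\ f b c /\ subset a c /\ subset c b.
Proof.
  intros interp. destruct uncountable_inhabited as [k0].
  destruct (transfinite_choice lt (Stage k0 (fun _ => k0)) lt_wf admissible
              admissible_local admissible_exists) as [F F_admissible].
  set (D := fun d => exists g, P g /\ exists c, f_below g c /\ c (point (F g)) /\
                                                d = witness (F g) c).
  destruct (f_bounded (setdiff P D)) as [a [Pa a_bound]].
  destruct (F_admissible a Pa) as [P_beta [_ [_ beta_witness]]].
  set (beta := point (F a)) in *.
  destruct (interp (singleton beta) (setdiff P D)) as [c [beta_c [b_c [c_beta c_sub]]]].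
  - intros x ->. split; [exact P_beta |]. intros [g [Pg [d [gd [dg E]]]]].
    exact (point_not_witness F F_admissible a g d Pa Pg gd dg E).
  - intros x [Px _]. exact Px.
  - assert (ac : f_below a c) by (apply (a_bound beta); assumption).
    destruct (beta_witness c ac (c_beta beta eq_refl)) as [cw _].
    apply (proj2 (c_sub _ cw)). exists a. split; [exact Pa |].
    exists c. repeat split; [exact ac | exact (c_beta beta eq_refl)].
Qed.

End Interpolation.

End KappaSequence.

Lemma not_kFN_Pow_on (Q : K -> Prop) : ~ small K Q -> ~ kFN_Pow_on K Q.
Proof.
  intros Q_large [f [f_small f_interp]].
  destruct (WellOrdering.wf_trichotomous_exists K) as [lt [lt_wf lt_trichotomous]].
  destruct (large_subset_with_small_segments lt Q lt_wf Q_large)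
    as [P [PQ [P_large segment_small]]].
  apply (no_interpolation lt P lt_wf lt_trichotomous P_large segment_small f f_small).
  intros a b ab bP. apply f_interp; [exact ab |]. intros x bx. exact (PQ x (bP x bx)).
Qed.

Lemma kFN_Pow_on_of_kFN (Q : K -> Prop) : kFN K (Pow K) (@Pow_le K) -> kFN_Pow_on K Q.
Proof.
  intros [f [f_small f_interp]]. exists f. split; [exact f_small |].
  intros a b ab _. exact (f_interp a b ab).
Qed.

Lemma large_disjoint_family_exists :
  exists (Q : K -> Prop) (A : K -> Pow K),
    ~ small K Q /\ (forall i, Q i -> ~ small K (A i)) /\
    (forall i j y, Q i -> Q j -> A i y -> A j y -> i = j).
Proof.
  destruct (WellOrdering.wf_trichotomous_exists K) as [lt [lt_wf lt_trichotomous]].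
  destruct (large_subset_with_small_segments lt _ lt_wf not_small_full)
    as [Q [_ [Q_large segment_small]]].
  destruct (disjoint_large_family lt Q lt_wf lt_trichotomous Q_large segment_small)
    as [A [A_large A_disjoint]].
  exists Q, A. auto.
Qed.

Definition almost_subset (a b : Pow K) : Prop := small K (setdiff a b).

Lemma almost_subset_trans (a b c : Pow K) :
  almost_subset a b -> almost_subset b c -> almost_subset a c.
Proof.
  intros ab bc. apply small_subset with (Y := fun k => setdiff a b k \/ setdiff b c k).
  - intros k [ak nck]. destruct (classic (b k)); [right | left]; split; assumption.
  - apply small_union; assumption.
Qed.

Lemma subset_almost (a b : Pow K) : subset a b -> almost_subset a b.
Proof.
  intros ab. apply small_subset with (Y := fun _ => False); [| exact small_empty].
  intros k [ak nbk]. exact (nbk (ab k ak)).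
Qed.

Lemma eq_mod_refl (a : Pow K) : eq_mod a a.
Proof. split; apply subset_almost; intros k ak; exact ak. Qed.

Definition class_of (a : Pow K) : PowMod K :=
  exist _ (eq_mod a) (ex_intro _ a (fun b => iff_refl (eq_mod a b))).

Lemma PowMod_inhabited (C : PowMod K) : exists a, proj1_sig C a.
Proof. destruct (proj2_sig C) as [a HC]. exists a. apply HC, eq_mod_refl. Qed.

Lemma PowMod_le_class_of (a b : Pow K) : subset a b -> PowMod_le (class_of a) (class_of b).
Proof.
  intros ab. exists a, b.
  split; [apply eq_mod_refl | split; [apply eq_mod_refl | apply subset_almost, ab]].
Qed.

Lemma PowMod_le_almost (C D : PowMod K) (a b : Pow K) :
  PowMod_le C D -> proj1_sig C a -> proj1_sig D b -> almost_subset a b.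
Proof.
  intros [a1 [b1 [Ca1 [Db1 a1b1]]]] Ca Db.
  destruct (proj2_sig C) as [a0 HC]. destruct (proj2_sig D) as [b0 HD].
  apply almost_subset_trans with a0; [apply (HC a), Ca |].
  apply almost_subset_trans with a1; [apply (HC a1), Ca1 |].
  apply almost_subset_trans with b1; [exact a1b1 |].
  apply almost_subset_trans with b0; [apply (HD b1), Db1 | apply (HD b), Db].
Qed.

Lemma kFN_Pow_on_of_kFN_PowMod (Q : K -> Prop) (A : K -> Pow K) :
  (forall i, Q i -> ~ small K (A i)) ->
  (forall i j y, Q i -> Q j -> A i y -> A j y -> i = j) ->
  kFN K (PowMod K) (@PowMod_le K) -> kFN_Pow_on K Q.
Proof.
  intros A_large A_disjoint [g [g_small g_interp]].
  set (E := fun (x : Pow K) y => exists i, x i /\ Q i /\ A i y).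
  set (r := fun (C : PowMod K) i => Q i /\ exists c, proj1_sig C c /\ almost_subset (A i) c).
  exists (fun x z => exists C, g (class_of (E x)) C /\ z = r C).
  split; [intros x; apply small_image, g_small |].
  intros a b ab bQ.
  destruct (g_interp (class_of (E a)) (class_of (E b))) as [C [aC [bC [EaC CEb]]]].
  { apply PowMod_le_class_of. intros y [i [ai Hi]]. exists i. split; [apply ab, ai | exact Hi]. }
  exists (r C). split; [exists C; split; [exact aC | reflexivity] |].
  split; [exists C; split; [exact bC | reflexivity] | split].
  - intros i ai. destruct (PowMod_inhabited C) as [c Cc].
    assert (Qi : Q i) by apply bQ, ab, ai.
    split; [exact Qi |]. exists c. split; [exact Cc |].
    apply almost_subset_trans with (E a).
    + apply subset_almost. intros y Ay. exists i. auto.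
    + exact (PowMod_le_almost _ _ _ _ EaC (eq_mod_refl (E a)) Cc).
  - intros i [Qi [c [Cc Aic]]]. apply NNPP. intros nbi. apply (A_large i Qi).
    (* [A i] is disjoint from [E b] but almost contained in it. *)
    apply small_subset with (Y := setdiff (A i) (E b)).
    + intros y Ay. split; [exact Ay |]. intros [j [bj [Qj Ajy]]].
      apply nbi. rewrite (A_disjoint i j y Qi Qj Ay Ajy). exact bj.
    + apply almost_subset_trans with c; [exact Aic |].
      exact (PowMod_le_almost _ _ _ _ CEb Cc (eq_mod_refl (E b))).
Qed.

End Cardinality.

Theorem proposition5p3 (K : Type) :
  uncountable K -> regular K ->
  ~ kFN K (PowMod K) (@PowMod_le K) /\ ~ kFN K (Pow K) (@Pow_le K).
Proof.
  intros K_uncountable K_regular.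
  destruct (large_disjoint_family_exists K K_uncountable K_regular)
    as [Q [A [Q_large [A_large A_disjoint]]]].
  split; intros FN.
  - apply (not_kFN_Pow_on K K_uncountable K_regular Q Q_large).
    exact (kFN_Pow_on_of_kFN_PowMod K K_uncountable K_regular Q A A_large A_disjoint FN).
  - apply (not_kFN_Pow_on K K_uncountable K_regular _ (not_small_full K)).
    exact (kFN_Pow_on_of_kFN K _ FN).
Qed.
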